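(* Let $\omega=(\omega_0,\dots,\omega_d)\in\mathbb{R}^{d+1}_{>0}$ with $\omega_0\le\omega_1\le\dots\le\omega_d$. Then for every $i\in\{1,\dots,d-1\}$, $$\mu_i(S(\omega))\leqslant\frac{\Big(\frac{1}{\omega_0}+\sum_{k=i+1}^d\frac{1}{\omega_k}\Big)\Big(\sum_{j=1}^i\frac{1}{\omega_j}\Big)+\sum_{1\le s<t\le i}\frac{1}{\omega_s\omega_t}}{\sum_{k=0}^d\frac{1}{\omega_k}}.$$
   Context: $S(\omega)=\operatorname{conv}(-\omega_0\mathbb{1}_d,\omega_1e_1,\dots,\omega_de_d)\subseteq\mathbb{R}^d$. For a convex body $K\subseteq\mathbb{R}^d$ and $i\in\{1,\dots,d\}$, $\mu_i(K)=\min\{\mu\ge0:(\mu K+\mathbb{Z}^d)\cap U\ne\emptyset$ for every $(d-i)$-dimensional affine subspace $U\subseteq\mathbb{R}^d\}$. *)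

From HB Require Import structures.
From mathcomp Require Import all_boot all_order all_algebra.
From mathcomp Require Import all_classical reals.
Set Implicit Arguments. Unset Strict Implicit. Unset Printing Implicit Defensive.
Import Order.TTheory GRing.Theory Num.Theory.
Local Open Scope ring_scope.
Local Open Scope classical_set_scope.

Definition lattice (R : realType) (d : nat) : set 'rV[R]_d :=
  [set z | exists n : 'rV[int]_d, z = map_mx (fun k : int => k%:~R) n].

Definition convex_hull_of (R : realType) (d m : nat) (p : 'I_m -> 'rV[R]_d)
  : set 'rV[R]_d :=
  [set x | exists lam : 'I_m -> R,
     (forall k, 0 <= lam k) /\ \sum_(k < m) lam k = 1 /\
     x = \sum_(k < m) lam k *: p k].

(* Vertices of S(omega): vertex 0 is -omega_0 * (1,...,1), vertex j+1 is
   omega_{j+1} e_{j+1} (coordinate j, 0-based). *)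
Definition S_vertex (R : realType) (d : nat) (w : nat -> R) (k : 'I_d.+1)
  : 'rV[R]_d :=
  match unlift ord0 k with
  | None => - (w 0%N) *: const_mx 1
  | Some j => w (j.+1)%N *: delta_mx 0 j
  end.

Definition S_simplex (R : realType) (d : nat) (w : nat -> R) : set 'rV[R]_d :=
  convex_hull_of (@S_vertex R d w).

Definition affine_subspace (R : realType) (d n : nat) (a : 'rV[R]_d)
  (B : 'M[R]_(n, d)) : set 'rV[R]_d :=
  [set x | exists u : 'rV[R]_n, x = a + u *m B].

Definition covering_set (R : realType) (d i : nat) (K : set 'rV[R]_d) : set R :=
  [set mu | 0 <= mu /\
     forall (a : 'rV[R]_d) (B : 'M[R]_(d - i, d)), \rank B = (d - i)%N ->
       exists x z y, K x /\ lattice z /\ affine_subspace a B y /\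
                     y = mu *: x + z].

Definition successive_covering_min (R : realType) (d i : nat)
  (K : set 'rV[R]_d) : R := inf (covering_set i K).

From HB Require Import structures.
From mathcomp Require Import all_boot all_order all_algebra.
From mathcomp Require Import all_classical reals.
From mathcomp Require Import ring lra zify.
Set Implicit Arguments. Unset Strict Implicit. Unset Printing Implicit Defensive.
Import Order.TTheory GRing.Theory Num.Theory.
Local Open Scope ring_scope.

(* Write {x} for the fractional part, a_k = 1 / w_k, W = a_0 + ... + a_d, and pad y in R^d
   to Y = (0, y_1, ..., y_d).
   If sum_k a_k {Y_k - t} <= mu for some t, then y lies in mu S(w) + Z^d: raising every
   {Y_k - t} by the common slack (mu - sum_k a_k {Y_k - t}) / W gives weights c_k with
   sum_k a_k c_k = mu, and the point of S(w) with barycentric coordinates a_k c_k / mu is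
   mapped by mu to ({y_j - t} - {-t})_j, which is y modulo Z^d.
   Taking t = Y_m for the m minimising sum_k a_k {Y_k - Y_m}, and averaging over m with
   weights a_m, W times that minimum is at most sum_(k < m) a_k a_m ({Y_k - Y_m} + {Y_m - Y_k}),
   hence at most the sum of a_k a_m over the pairs k < m with Y_k or Y_m nonzero.
   A (d - i)-dimensional affine subspace contains a point with at most i nonzero
   coordinates, and since a is nonincreasing that pair sum is largest when the nonzero
   coordinates are the first i ones, where it equals the numerator of the bound. *)

Lemma count_iotaS (P : pred nat) m n :
  count P (iota m n.+1) = (count P (iota m n) + P (m + n))%N.
Proof. by rewrite -addn1 iotaD count_cat /= addn0. Qed.

Lemma sum_nat_pairs (R : nmodType) (g : nat -> nat -> R) n :
  \sum_(0 <= m < n) \sum_(0 <= k < n) g k m =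
  \sum_(0 <= m < n) (\sum_(0 <= k < m) (g k m + g m k) + g m m).
Proof.
elim: n => [|n IH]; first by rewrite !big_geq.
rewrite big_nat_recr //= [RHS]big_nat_recr //= -IH big_split /=.
rewrite (eq_bigr (fun m => \sum_(0 <= k < n) g k m + g n m)); last first.
  by move=> m _; rewrite big_nat_recr.
rewrite big_split /= [in LHS]big_nat_recr //= -!addrA; congr (_ + _).
by rewrite addrCA addrA.
Qed.

Lemma exists_le_weighted_mean (R : realDomainType) (a h : nat -> R) n :
  (forall k, (k <= n)%N -> 0 <= a k) ->
  exists2 m, (m <= n)%N &
    (\sum_(0 <= k < n.+1) a k) * h m <= \sum_(0 <= k < n.+1) a k * h k.
Proof.
move=> a_ge0; case: (@arg_minP _ _ _ (ord0 : 'I_n.+1) xpredT (h \o val)) => //= m _ h_min.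
exists m; first by rewrite -ltnS.
rewrite big_distrl /=; apply: ler_sum_nat => k /andP[_ lt_kn].
by apply: ler_wpM2l; [apply: a_ge0 | exact: (h_min (Ordinal lt_kn))].
Qed.

Section ExtremalPairSum.
Variables (R : realDomainType) (a : nat -> R).

Definition supp_sum (P : pred nat) n := \sum_(0 <= k < n | P k) a k.

Definition pair_sum (P : pred nat) n :=
  \sum_(0 <= m < n) \sum_(0 <= k < m | P k || P m) a k * a m.

Definition compl_sum n i := a 0 + \sum_(i.+1 <= k < n) a k.

Definition prefix_sum i := \sum_(1 <= j < i.+1) a j.

Definition prefix_pair_sum i :=
  \sum_(1 <= s < i.+1) \sum_(s.+1 <= t < i.+1) a s * a t.

(* [pair_sum] of the support {1, ..., i}. *)
Definition extremal_pair_sum n i := compl_sum n i * prefix_sum i + prefix_pair_sum i.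

Lemma supp_sumS P n : supp_sum P n.+1 = supp_sum P n + (if P n then a n else 0).
Proof. by rewrite /supp_sum !(big_mkcond P) big_nat_recr. Qed.

Lemma pair_sumS P n :
  pair_sum P n.+1 =
  pair_sum P n + (if P n then \sum_(0 <= k < n) a k else supp_sum P n) * a n.
Proof.
rewrite /pair_sum big_nat_recr //=; congr (_ + _).
rewrite -big_distrl /=; case: (P n); congr (_ * _); apply: eq_bigl => k.
  by rewrite orbT.
by rewrite orbF.
Qed.

Lemma compl_sumS n i : (i < n)%N -> compl_sum n.+1 i = compl_sum n i + a n.
Proof. by move=> lt_in; rewrite /compl_sum big_nat_recr // addrA. Qed.

Lemma compl_sum_shift n i : (i.+1 < n)%N -> compl_sum n i = compl_sum n i.+1 + a i.+1.
Proof. by move=> lt_in; rewrite /compl_sum (big_ltn lt_in); ring. Qed.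

Lemma prefix_sum0 : prefix_sum 0 = 0.
Proof. by rewrite /prefix_sum big_geq. Qed.

Lemma prefix_sumS i : prefix_sum i.+1 = prefix_sum i + a i.+1.
Proof. by rewrite /prefix_sum big_nat_recr. Qed.

Lemma prefix_pair_sumS i : prefix_pair_sum i.+1 = prefix_pair_sum i + a i.+1 * prefix_sum i.
Proof.
rewrite /prefix_pair_sum big_nat_recr //= [X in _ + X]big_geq // addr0.
rewrite /prefix_sum big_distrr -big_split /=.
by apply: eq_big_nat => s /andP[_ lt_si]; rewrite big_nat_recr //= mulrC.
Qed.

Lemma compl_prefix_sum n i : (i < n)%N -> compl_sum n i + prefix_sum i = \sum_(0 <= k < n) a k.
Proof.
move=> lt_in; rewrite /compl_sum /prefix_sum (big_ltn (leq_ltn_trans (leq0n i) lt_in)).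
by rewrite [in RHS](@big_cat_nat _ _ _ i.+1) //=; ring.
Qed.

Lemma extremal_pair_sumS n i : (i < n)%N ->
  extremal_pair_sum n.+1 i = extremal_pair_sum n i + a n * prefix_sum i.
Proof. by move=> lt_in; rewrite /extremal_pair_sum compl_sumS //; ring. Qed.

Lemma extremal_pair_sum_shift n i : (i.+1 < n)%N ->
  extremal_pair_sum n i.+1 = extremal_pair_sum n i + a i.+1 * compl_sum n i.+1.
Proof.
move=> lt_in.
by rewrite /extremal_pair_sum (compl_sum_shift lt_in) prefix_sumS prefix_pair_sumS; ring.
Qed.

Lemma extremal_pair_sum0 n : extremal_pair_sum n 0 = 0.
Proof. by rewrite /extremal_pair_sum prefix_sum0 /prefix_pair_sum big_geq // mulr0 addr0. Qed.

Variable N : nat.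
Hypothesis a_ge0 : forall k, (k <= N)%N -> 0 <= a k.
Hypothesis a_noninc : forall k l, (k <= l <= N)%N -> a l <= a k.

Lemma compl_sum_ge n i : (n <= N.+1)%N -> a 0 <= compl_sum n i.
Proof.
move=> le_nN; rewrite /compl_sum lerDl big_nat_cond.
by apply: sumr_ge0 => k /andP[/andP[_ lt_kn] _]; apply: a_ge0; lia.
Qed.

Lemma extremal_pair_sum_mono n i j : (i <= j)%N -> (j < n)%N -> (n <= N.+1)%N ->
  extremal_pair_sum n i <= extremal_pair_sum n j.
Proof.
move=> le_ij lt_jn le_nN; elim: j le_ij lt_jn => [|j IH]; first by rewrite leqn0 => /eqP->.
rewrite leq_eqVlt ltnS => /orP[/eqP-> //|le_ij] lt_jn.
apply: le_trans (IH le_ij (ltnW lt_jn)) _.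
rewrite extremal_pair_sum_shift // lerDl; apply: mulr_ge0; first by apply: a_ge0; lia.
exact: le_trans (a_ge0 (leq0n N)) (compl_sum_ge j.+1 le_nN).
Qed.

Lemma extremal_pair_sum_gt0 n i : 0 < a 0 -> 0 < a 1 -> (0 < i < n)%N -> (n <= N.+1)%N ->
  0 < extremal_pair_sum n i.
Proof.
move=> a0_gt0 a1_gt0 /andP[i_gt0 lt_in] le_nN.
apply: lt_le_trans (extremal_pair_sum_mono i_gt0 lt_in le_nN).
rewrite extremal_pair_sum_shift ?extremal_pair_sum0 ?add0r ?mulr_gt0 //; last lia.
exact: lt_le_trans a0_gt0 (compl_sum_ge 1 le_nN).
Qed.

Lemma supp_sum_le_prefix_sum P n : ~~ P 0%N -> (n <= N)%N ->
  supp_sum P n.+1 <= prefix_sum (count P (iota 1 n)).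
Proof.
move=> P0; elim: n => [|n IH] le_nN.
  by rewrite supp_sumS (negPf P0) /supp_sum big_geq // prefix_sum0 addr0.
have le_cn : (count P (iota 1 n) <= n)%N by rewrite -[leqRHS](size_iota 1) count_size.
rewrite supp_sumS count_iotaS add1n.
case: (P n.+1) => /=; last by rewrite addn0 addr0; apply: IH; lia.
rewrite addn1 prefix_sumS lerD //; first by apply: IH; lia.
apply: a_noninc; lia.
Qed.

Lemma pair_sum_le_extremal P n : ~~ P 0%N -> (n <= N)%N ->
  pair_sum P n.+1 <= extremal_pair_sum n.+1 (count P (iota 1 n)).
Proof.
move=> P0; elim: n => [|n IH] le_nN.
  rewrite pair_sumS (negPf P0) /pair_sum /supp_sum !big_geq // /extremal_pair_sum.
  by rewrite prefix_sum0 /prefix_pair_sum big_geq //; lra.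
set c := count P (iota 1 n).
have le_cn : (c <= n)%N by rewrite -[leqRHS](size_iota 1) count_size.
have an_ge0 : 0 <= a n.+1 by apply: a_ge0.
rewrite pair_sumS count_iotaS add1n -/c.
case: (P n.+1) => /=; last first.
  rewrite addn0 extremal_pair_sumS; last lia.
  apply: lerD; first by apply: IH; lia.
  by rewrite mulrC; apply: ler_wpM2l => //; apply: supp_sum_le_prefix_sum; lia.
have lt_cn : (c < n.+1)%N by lia.
rewrite addn1 -(compl_prefix_sum lt_cn).
have {}IH := IH (ltnW le_nN).
have shift : compl_sum n.+1 c = compl_sum n.+2 c.+1 + a c.+1 - a n.+1.
  by move: (compl_sumS lt_cn) (@compl_sum_shift n.+2 c lt_cn); lra.
(* The right side grows by the left side's increment plus exactly this product. *)
have key : 0 <= (a c.+1 - a n.+1) * (compl_sum n.+2 c.+1 - a n.+1).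
  apply: mulr_ge0; rewrite subr_ge0; first by apply: a_noninc; lia.
  by apply: (le_trans (@a_noninc 0 n.+1 _) (compl_sum_ge c.+1 _)); lia.
move: IH key; rewrite /extremal_pair_sum shift prefix_sumS prefix_pair_sumS; lra.
Qed.

End ExtremalPairSum.

Section FractionalPart.
Variable R : archiRealDomainType.

Definition fract (x : R) := x - (Num.floor x)%:~R.

Lemma fract_ge0 x : 0 <= fract x.
Proof. by rewrite subr_ge0 floor_le. Qed.

Lemma fract0 : fract 0 = 0.
Proof. by rewrite /fract floor0 subr0. Qed.

Lemma fract_addN_le1 x : fract x + fract (- x) <= 1.
Proof.
have ceilE : (Num.floor (- x))%:~R = - (Num.ceil x)%:~R :> R.
  by rewrite ceilNfloor intrN opprK.
rewrite /fract ceilE ceil_floor intrD.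
have : ((x \isn't a Num.int) : int)%:~R <= 1 :> R by case: (x \isn't a Num.int).
lra.
Qed.

Lemma sum_fract_diff_le_pair_sum (a Y : nat -> R) n :
  (forall k, (k < n)%N -> 0 <= a k) ->
  \sum_(0 <= m < n) a m * \sum_(0 <= k < n) a k * fract (Y k - Y m) <=
  pair_sum a [pred k | Y k != 0] n.
Proof.
move=> a_ge0; under eq_bigr do rewrite big_distrr /=.
rewrite (sum_nat_pairs (fun k m => a m * (a k * fract (Y k - Y m)))) /pair_sum.
apply: ler_sum_nat => m /andP[_ lt_mn]; rewrite subrr fract0 !mulr0 addr0.
rewrite [leRHS]big_mkcond /=; apply: ler_sum_nat => k /andP[_ lt_km].
have [ak_ge0 am_ge0] : 0 <= a k /\ 0 <= a m by split; apply: a_ge0; lia.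
case: ifPn => [_|]; last first.
  by rewrite negb_or !negbK => /andP[/eqP-> /eqP->]; rewrite subrr fract0 !mulr0 addr0.
have := fract_addN_le1 (Y k - Y m); rewrite opprB => fract_le1.
have := mulr_ge0 ak_ge0 am_ge0 => akm_ge0.
have -> : a m * (a k * fract (Y k - Y m)) + a k * (a m * fract (Y m - Y k)) =
    a k * a m * (fract (Y k - Y m) + fract (Y m - Y k)) by ring.
by rewrite -[leRHS]mulr1 ler_wpM2l.
Qed.

End FractionalPart.

Lemma exists_affine_point_zeros (F : fieldType) n d (B : 'M[F]_(n, d)) (a : 'rV_d) :
  \rank B = n -> exists u : 'rV_n, (n <= #|[set j | ((a + u *m B) 0 j == 0)%R]|)%N.
Proof.
move=> rB; set f := maxrankfun B^T.
have full : row_full (rowsub f B^T)^T by rewrite /row_full mxrank_tr (eqP (maxrowsub_free _)).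
have /submxP [u def_u] := submx_full (\row_k (- a 0 (f k))) full.
exists u.
have sub : f @: [set: 'I_(\rank B^T)] \subset [set j | ((a + u *m B) 0 j == 0)%R].
  apply/fintype.subsetP => _ /imsetP[k _ ->]; rewrite inE !mxE.
  have := congr1 (fun v : 'rV_(\rank B^T) => v 0 k) def_u; rewrite !mxE => def_uk.
  rewrite (_ : \sum_j _ = - a 0 (f k)) ?subrr // def_uk.
  by apply: eq_bigr => l _; rewrite !mxE.
rewrite -{1}rB -(mxrank_tr B); apply: leq_trans (subset_leq_card sub).
by rewrite card_imset ?cardsT ?card_ord //; apply: maxrankfun_inj.
Qed.

Section SimplexCover.
Variables (R : realType) (d : nat) (w : nat -> R).
Hypothesis w_gt0 : forall k, (k <= d)%N -> 0 < w k.

Lemma S_vertex_comb_coord (lam : 'I_d.+1 -> R) (j : 'I_d) :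
  (\sum_(k < d.+1) lam k *: S_vertex w k) 0 j = lam (lift ord0 j) * w j.+1 - lam ord0 * w 0.
Proof.
rewrite summxE big_ord_recl /S_vertex unlift_none !mxE mulr1 mulrN addrC.
congr (_ - _); rewrite (bigD1 j) //= liftK !mxE !eqxx mulr1 big1 ?addr0 // => k ne_kj.
by rewrite liftK !mxE eq_sym (negPf ne_kj) !mulr0.
Qed.

Lemma scaled_S_simplex_mem (c : nat -> R) (mu : R) : 0 < mu ->
  (forall k, (k <= d)%N -> 0 <= c k) -> \sum_(0 <= k < d.+1) c k / w k = mu ->
  exists2 x, S_simplex w x & mu *: x = \row_(j < d) (c j.+1 - c 0).
Proof.
move=> mu_gt0 c_ge0 sum_c.
have w_neq0 k : (k <= d)%N -> w k != 0 by move=> le_kd; rewrite gt_eqF ?w_gt0.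
exists (\sum_(k < d.+1) (c k / w k / mu) *: S_vertex w k).
  exists (fun k : 'I_d.+1 => c k / w k / mu); split; last split=> //.
    by move=> k; rewrite !divr_ge0 ?c_ge0 ?ltW ?w_gt0 // -ltnS.
  by rewrite -big_distrl /= -(big_mkord xpredT (fun k => c k / w k)) sum_c divff ?gt_eqF.
apply/rowP => j; rewrite mxE S_vertex_comb_coord mxE lift0.
change (nat_of_ord (ord0 : 'I_d.+1)) with 0%N.
by field; rewrite gt_eqF // !w_neq0.
Qed.

Lemma inv_weight_ge0 k : (k <= d)%N -> 0 <= 1 / w k.
Proof. by move=> le_kd; rewrite divr_ge0 ?ltW ?w_gt0. Qed.

Lemma inv_weight_sum_gt0 : 0 < \sum_(0 <= k < d.+1) 1 / w k.
Proof.
rewrite big_ltn // ltr_pwDl ?divr_gt0 ?w_gt0 //.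
by rewrite big_nat_cond sumr_ge0 // => k /andP[/andP[_ lt_kd] _]; rewrite inv_weight_ge0.
Qed.

(* (0, y_1, ..., y_d), indexed by nat; the indices beyond d are mapped to 0. *)
Definition coord0 (y : 'rV[R]_d) (k : nat) : R :=
  if k is j.+1 then oapp (y 0) 0 (insub j) else 0.

Lemma coord0S (y : 'rV[R]_d) (j : 'I_d) : coord0 y j.+1 = y 0 j.
Proof. by rewrite /= valK. Qed.

Lemma count_coord0_neq0 (y : 'rV[R]_d) :
  count [pred k | coord0 y k != 0] (iota 1 d) = (d - #|[set j | (y 0 j == 0)%R]|)%N.
Proof.
rewrite -sum1_count (_ : iota 1 d = index_iota 1 d.+1); last by rewrite /index_iota subn1.
rewrite big_add1 /= big_mkord.
transitivity #|[set j | y 0 j != 0]|.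
  by rewrite -sum1_card; apply: eq_bigl => j; rewrite inE /= valK.
rewrite [LHS]cardsCs card_ord; congr (_ - _)%N.
by apply: eq_card => j; rewrite !inE negbK.
Qed.

Lemma S_simplex_lattice_cover (y : 'rV[R]_d) (mu t : R) : 0 < mu ->
  \sum_(0 <= k < d.+1) fract (coord0 y k - t) / w k <= mu ->
  exists x z, S_simplex w x /\ lattice z /\ y = mu *: x + z.
Proof.
move=> mu_gt0 sum_le.
set W := \sum_(0 <= k < d.+1) 1 / w k.
set s := (mu - \sum_(0 <= k < d.+1) fract (coord0 y k - t) / w k) / W.
have s_ge0 : 0 <= s by rewrite divr_ge0 ?subr_ge0 // ltW ?inv_weight_sum_gt0.
have sum_c : \sum_(0 <= k < d.+1) (fract (coord0 y k - t) + s) / w k = mu.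
  rewrite (eq_bigr (fun k => fract (coord0 y k - t) / w k + s * (1 / w k))); last first.
    by move=> k _; rewrite mulrDl mul1r.
  by rewrite big_split /= -big_distrr /= -/W divfK ?gt_eqF ?inv_weight_sum_gt0 // addrC subrK.
have [x Sx mux] := scaled_S_simplex_mem mu_gt0 (fun k _ => addr_ge0 (fract_ge0 _) s_ge0) sum_c.
exists x, (y - mu *: x); split=> //; split; last by rewrite addrC subrK.
exists (\row_j (Num.floor (y 0 j - t) - Num.floor (- t))).
apply/rowP => j; rewrite mux !mxE coord0S /fract /= sub0r intrB; lra.
Qed.

Hypothesis w_mono : forall k l, (k <= l <= d)%N -> w k <= w l.

Lemma inv_weight_noninc k l : (k <= l <= d)%N -> 1 / w l <= 1 / w k.
Proof.
move=> le_kld; have /andP[le_kl le_ld] := le_kld.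
by rewrite !div1r lef_pV2 ?posrE ?w_gt0 ?w_mono //; lia.
Qed.

Lemma exists_shift_fract_sum_le (y : 'rV[R]_d) i : (i <= d)%N ->
  (d - i <= #|[set j | (y 0 j == 0)%R]|)%N ->
  exists t, \sum_(0 <= k < d.+1) fract (coord0 y k - t) / w k <=
    extremal_pair_sum (fun k => 1 / w k) d.+1 i / \sum_(0 <= k < d.+1) 1 / w k.
Proof.
move=> le_id zeros; set a := fun k => 1 / w k.
set P := [pred k | coord0 y k != 0].
have P0 : ~~ P 0%N by rewrite /= eqxx.
have le_ci : (count P (iota 1 d) <= i)%N by rewrite count_coord0_neq0; lia.
pose h m := \sum_(0 <= k < d.+1) a k * fract (coord0 y k - coord0 y m).
have [m _ mean] := exists_le_weighted_mean h inv_weight_ge0.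
exists (coord0 y m).
have -> : \sum_(0 <= k < d.+1) fract (coord0 y k - coord0 y m) / w k = h m.
  by apply: eq_bigr => k _; rewrite /a div1r mulrC.
rewrite ler_pdivlMr ?inv_weight_sum_gt0 // mulrC.
apply: le_trans mean _.
apply: le_trans (sum_fract_diff_le_pair_sum (n := d.+1) (coord0 y) inv_weight_ge0) _.
apply: le_trans (pair_sum_le_extremal inv_weight_ge0 inv_weight_noninc P0 (leqnn d)) _.
exact: (extremal_pair_sum_mono (n := d.+1) inv_weight_ge0 le_ci le_id (leqnn _)).
Qed.

End SimplexCover.

Theorem proposition5p8 (R : realType) (d : nat) (w : nat -> R)
  (wpos : forall k : nat, (k <= d)%N -> 0 < w k)
  (wmono : forall k l : nat, (k <= l)%N -> (l <= d)%N -> w k <= w l)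
  (i : nat) (hi1 : (1 <= i)%N) (hi2 : (i <= d.-1)%N) :
  @successive_covering_min R d i (@S_simplex R d w) <=
  ((1 / w 0%N + \sum_(i.+1 <= k < d.+1) 1 / w k) *
     (\sum_(1 <= j < i.+1) 1 / w j)
   + \sum_(1 <= s < i.+1) \sum_(s.+1 <= t < i.+1) 1 / (w s * w t))
  / (\sum_(0 <= k < d.+1) 1 / w k).
Proof.
have w_mono k l : (k <= l <= d)%N -> w k <= w l by move=> /andP[]; apply: wmono.
have le_id : (i <= d)%N by lia.
rewrite (_ : _ + _ = extremal_pair_sum (fun k => 1 / w k) d.+1 i); last first.
  rewrite /extremal_pair_sum; congr (_ + _); apply: eq_bigr => s _; apply: eq_bigr => t _.
  by rewrite mulf_div mulr1.
set mu := _ / _.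
have mu_gt0 : 0 < mu.
  rewrite divr_gt0 ?inv_weight_sum_gt0 // (extremal_pair_sum_gt0 (inv_weight_ge0 wpos)) //.
  - by rewrite divr_gt0 ?wpos.
  - by rewrite divr_gt0 ?wpos //; lia.
  - by apply/andP; split; lia.
apply: ge_inf; first by exists 0 => x [].
split=> [|p B rB]; first exact: ltW.
have [u zeros] := exists_affine_point_zeros p rB.
have [t fract_le] := exists_shift_fract_sum_le wpos w_mono le_id zeros.
have [x [z [Sx [Lz def_y]]]] := S_simplex_lattice_cover wpos mu_gt0 fract_le.
by exists x, z, (p + u *m B); do !split=> //; exists u.
Qed.
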